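(* Define $f:\mathbb{R}^2\to\mathbb{R}$ by $f(\mathbf x)=\sqrt{\log\|\mathbf x\|}$ if $\|\mathbf x\|\ge1$ and $f(\mathbf x)=0$ if $\|\mathbf x\|<1$. Then for all $\mathbf x,\mathbf y\in\mathbb{R}^2$ with $\mathbf x\ne\mathbf 0$, $$f(\mathbf x+\mathbf y)-f(\mathbf x)\le1+\frac{\|\mathbf y\|}{\|\mathbf x\|}.$$ Moreover, for every $\varepsilon\in(0,1)$ there exist constants $r,C>0$ depending on $\varepsilon$ such that for all $\mathbf x$ with $\|\mathbf x\|\ge r$ and all $\mathbf y$ with $\|\mathbf y\|\le\|\mathbf x\|^{1-\varepsilon}$, $$f(\mathbf x+\mathbf y)-f(\mathbf x)\le\frac{1}{2\sqrt{\log\|\mathbf x\|}}\Big(\frac{\mathbf x\cdot\mathbf y}{\|\mathbf x\|^2}+\frac{\|\mathbf y\|^2}{2\|\mathbf x\|^2}-\frac{(\mathbf x\cdot\mathbf y)^2}{\|\mathbf x\|^4}+\frac{C\|\mathbf y\|^2}{\|\mathbf x\|^{2+\varepsilon}}\Big)-\frac{1}{8\log^{3/2}\|\mathbf x\|}\frac{(\mathbf x\cdot\mathbf y)^2}{\|\mathbf x\|^4}+\frac{C\|\mathbf y\|^2}{\|\mathbf x\|^{2+\varepsilon}\log^{3/2}\|\mathbf x\|}.$$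
   Context: $\|\cdot\|$ is the Euclidean norm and $\mathbf x\cdot\mathbf y$ the standard scalar product. *)

From Stdlib Require Import Reals Lra.
Open Scope R_scope.

Definition vadd (x y : R * R) : R * R := (fst x + fst y, snd x + snd y).
Definition dot (x y : R * R) : R := fst x * fst y + snd x * snd y.
Definition norm (x : R * R) : R := sqrt (dot x x).

Definition flog (x : R * R) : R :=
  if Rle_dec 1 (norm x) then sqrt (ln (norm x)) else 0.

From Pilot Require Import Defs.
From Stdlib Require Import Reals Lra Psatz.
From Coquelicot Require Import Coquelicot.
(* Restore [Defs.norm] over Coquelicot's [norm]. *)
Import Defs.
Open Scope R_scope.

(* Stdlib's [ln] vanishes on nonpositive arguments and [sqrt] on negative ones,
   so [flog = sqrt o ln o norm] everywhere.  The first bound then follows from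
   [ln (s + m) <= ln s + m / s] and [sqrt (A + w) <= sqrt A + 1 + w].
   For the second, put [s = |x|], [a = x.y / s^2], [t = |y| / s] and
   [u = 2 a + t^2], so that [|x + y|^2 = s^2 (1 + u)] and
   [ln |x + y| = ln s + ln (1 + u) / 2].  Bounding [ln (1 + u)] by its cubic
   Taylor polynomial and [sqrt] at [ln s] by its third order Taylor polynomial
   leaves a polynomial inequality in [a], [t] and [sqrt (ln s)]; once
   [|y| <= s^(1-eps)] and [s] is large, [|a| <= t <= s^-eps <= 1/16], and all
   error terms are of order [t^3 <= t^2 / s^eps], absorbed by [C = 100]. *)

Lemma ln_nonpos x : x <= 0 -> ln x = 0.
Proof. intros Hx; unfold ln; destruct (Rlt_dec 0 x); [exfalso; lra | reflexivity]. Qed.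

Lemma sqrt_ln_le x y : x <= y -> sqrt (ln x) <= sqrt (ln y).
Proof.
  intros Hxy; destruct (Rle_lt_dec x 0) as [Hx | Hx].
  - rewrite (ln_nonpos x Hx), sqrt_0; apply sqrt_pos.
  - apply sqrt_le_1_alt, ln_le; lra.
Qed.

Lemma sqrt_ln_lt1 x : x < 1 -> sqrt (ln x) = 0.
Proof.
  intros Hx; destruct (Rle_lt_dec x 0) as [Hx0 | Hx0].
  - rewrite (ln_nonpos x Hx0); apply sqrt_0.
  - apply sqrt_neg_0; rewrite <- ln_1; apply ln_le; lra.
Qed.

Lemma flog_sqrt_ln x : flog x = sqrt (ln (norm x)).
Proof.
  unfold flog; destruct (Rle_dec 1 (norm x)); [reflexivity |].
  symmetry; apply sqrt_ln_lt1; lra.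
Qed.

Lemma ln_1p_le w : -1 < w -> ln (1 + w) <= w.
Proof. intros Hw; rewrite <- (ln_exp w) at 2; apply ln_le; [lra | apply exp_ineq1_le]. Qed.

Lemma ln_add_le s m : 0 < s -> 0 <= m -> ln (s + m) <= ln s + m / s.
Proof.
  intros Hs Hm.
  assert (Hms : 0 <= m / s) by (apply Rle_mult_inv_pos; lra).
  replace (s + m) with (s * (1 + m / s)) by (field; lra).
  rewrite ln_mult by lra.
  pose proof (ln_1p_le (m / s) ltac:(lra)); lra.
Qed.

Lemma sqrt_add_le A w : 0 <= A -> 0 <= w -> sqrt (A + w) <= sqrt A + sqrt w.
Proof.
  intros HA Hw.
  pose proof (sqrt_sqrt A HA); pose proof (sqrt_sqrt w Hw).
  pose proof (sqrt_pos A); pose proof (sqrt_pos w).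
  rewrite <- (sqrt_pow2 (sqrt A + sqrt w)) by lra.
  apply sqrt_le_1_alt; nra.
Qed.

Lemma sqrt_le_1_add x : 0 <= x -> sqrt x <= 1 + x.
Proof. intros Hx; pose proof (sqrt_sqrt x Hx); pose proof (sqrt_pos x); nra. Qed.

Lemma sqrt_add_le_add A w : 0 <= w -> sqrt (A + w) <= sqrt A + 1 + w.
Proof.
  intros Hw; pose proof (sqrt_le_1_add w Hw).
  destruct (Rle_lt_dec A 0) as [HA | HA].
  - rewrite (sqrt_neg_0 A HA).
    assert (sqrt (A + w) <= sqrt w) by (apply sqrt_le_1_alt; lra); lra.
  - pose proof (sqrt_add_le A w ltac:(lra) Hw); lra.
Qed.

Lemma min_of_deriv_sign (h h' : R -> R) (lo x0 u : R) :
  lo < x0 -> lo < u ->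
  (forall c, lo < c -> derivable_pt_lim h c (h' c)) ->
  (forall c, lo < c -> 0 <= (c - x0) * h' c) ->
  h x0 <= h u.
Proof.
  intros Hx0 Hu Hd Hsign.
  destruct (Rtotal_order u x0) as [Hlt | [-> | Hgt]].
  - destruct (MVT_cor2 h h' u x0 Hlt) as [c [Hc Hcin]]; [intros c Hc; apply Hd; lra |].
    specialize (Hsign c ltac:(lra)); nra.
  - lra.
  - destruct (MVT_cor2 h h' x0 u Hgt) as [c [Hc Hcin]]; [intros c Hc; apply Hd; lra |].
    specialize (Hsign c ltac:(lra)); nra.
Qed.

Lemma ln_1p_le_cubic u : -1 < u -> ln (1 + u) <= u - u ^ 2 / 2 + u ^ 3 / 3.
Proof.
  intros Hu.
  set (h v := v - v ^ 2 / 2 + v ^ 3 / 3 - ln (1 + v)).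
  assert (Hmin : h 0 <= h u).
  { apply (min_of_deriv_sign h (fun c => c ^ 3 / (1 + c)) (-1)); [lra | lra | |].
    - intros c Hc; apply is_derive_Reals; unfold h.
      auto_derive; [lra | field; lra].
    - intros c Hc.
      replace ((c - 0) * (c ^ 3 / (1 + c))) with ((c ^ 2) ^ 2 * / (1 + c)) by (field; lra).
      apply Rle_mult_inv_pos; [apply pow2_ge_0 | lra]. }
  unfold h in Hmin; rewrite Rplus_0_r, ln_1 in Hmin; lra.
Qed.

Lemma dot_self_nonneg x : 0 <= dot x x.
Proof. destruct x as [x1 x2]; unfold dot; simpl; nra. Qed.

Lemma norm_nonneg x : 0 <= norm x.
Proof. apply sqrt_pos. Qed.

Lemma norm_mul_self x : norm x * norm x = dot x x.
Proof. apply sqrt_sqrt, dot_self_nonneg. Qed.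

Lemma norm_pos x : x <> (0, 0) -> 0 < norm x.
Proof.
  intros Hx; apply sqrt_lt_R0.
  destruct (Rle_lt_or_eq_dec _ _ (dot_self_nonneg x)) as [Hlt | Heq]; [exact Hlt |].
  destruct x as [x1 x2]; unfold dot in Heq; simpl in Heq.
  destruct (Rplus_sqr_eq_0 x1 x2) as [-> ->]; [unfold Rsqr; lra | easy].
Qed.

Lemma Rabs_dot_le x y : Rabs (dot x y) <= norm x * norm y.
Proof.
  assert (Lagrange : Rsqr (dot x y) <= dot x x * dot y y).
  { destruct x as [x1 x2], y as [y1 y2]; unfold Rsqr, dot; simpl.
    pose proof (pow2_ge_0 (x1 * y2 - x2 * y1)); nra. }
  rewrite <- sqrt_Rsqr_abs; unfold norm; rewrite <- sqrt_mult_alt by apply dot_self_nonneg.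
  now apply sqrt_le_1_alt.
Qed.

Lemma dot_vadd_self x y : dot (vadd x y) (vadd x y) = dot x x + 2 * dot x y + dot y y.
Proof. destruct x, y; unfold dot, vadd; simpl; ring. Qed.

Lemma norm_vadd_le x y : norm (vadd x y) <= norm x + norm y.
Proof.
  pose proof (Rle_trans _ _ _ (Rle_abs (dot x y)) (Rabs_dot_le x y)).
  pose proof (norm_nonneg x); pose proof (norm_nonneg y).
  rewrite <- (sqrt_pow2 (norm x + norm y)) by lra.
  apply sqrt_le_1_alt; rewrite dot_vadd_self, <- (norm_mul_self x), <- (norm_mul_self y); nra.
Qed.

Lemma flog_vadd_sub_le x y : x <> (0, 0) -> flog (vadd x y) - flog x <= 1 + norm y / norm x.
Proof.
  intros Hx; rewrite !flog_sqrt_ln.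
  pose proof (norm_pos x Hx); pose proof (norm_nonneg y).
  assert (Hw : 0 <= norm y / norm x) by (apply Rle_mult_inv_pos; lra).
  assert (sqrt (ln (norm (vadd x y))) <= sqrt (ln (norm x) + norm y / norm x)).
  { apply Rle_trans with (sqrt (ln (norm x + norm y))).
    - apply sqrt_ln_le, norm_vadd_le.
    - apply sqrt_le_1_alt, ln_add_le; lra. }
  pose proof (sqrt_add_le_add (ln (norm x)) _ Hw); lra.
Qed.

Lemma sqrt_add_le_taylor3 L d : 0 < L -> 0 <= L + d ->
  sqrt (L + d) <= sqrt L + d / (2 * sqrt L) - d ^ 2 / (8 * (L * sqrt L))
                  + d ^ 3 / (16 * (L * L * sqrt L)).
Proof.
  intros HL Hd.
  set (q := sqrt L); set (w := sqrt (L + d)).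
  assert (Hq : 0 < q) by (apply sqrt_lt_R0; lra).
  assert (Hq2 : q * q = L) by (apply sqrt_sqrt; lra).
  assert (Hw : 0 <= w) by apply sqrt_pos.
  assert (Hw2 : w * w = L + d) by (apply sqrt_sqrt; lra).
  replace d with (w * w - q * q) by lra; rewrite <- Hq2.
  apply Rminus_le.
  replace (w - _) with (- ((w - q) ^ 4 * (w * w + 4 * w * q + 5 * q * q) / (16 * q ^ 5)))
    by (field; lra).
  enough (0 <= (w - q) ^ 4 * (w * w + 4 * w * q + 5 * q * q) / (16 * q ^ 5)) by lra.
  apply Rle_mult_inv_pos; [| pose proof (pow_lt q 5 Hq); lra].
  replace ((w - q) ^ 4) with (((w - q) ^ 2) ^ 2) by ring.
  apply Rmult_le_pos; [apply pow2_ge_0 | nra].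
Qed.

Lemma cube_bounds u c : -c <= u <= c -> -c ^ 3 <= u ^ 3 <= c ^ 3.
Proof.
  intros Hu; assert (u * u <= c * c) by nra.
  replace (u ^ 3) with (u * (u * u)) by ring; replace (c ^ 3) with (c * (c * c)) by ring.
  split; nra.
Qed.

Definition half_ln1p_poly (u : R) : R := u / 2 - u ^ 2 / 4 + u ^ 3 / 6.

Section HalfLn1pPoly.

Variables a t : R.
Hypothesis Ht : 0 <= t <= 1 / 16.
Hypothesis Ha : -t <= a <= t.

Lemma cube_two_mul_add_sqr_bounds : -27 * t ^ 3 <= (2 * a + t ^ 2) ^ 3 <= 27 * t ^ 3.
Proof.
  destruct (cube_bounds (2 * a + t ^ 2) (3 * t)) as [Hlo Hhi]; [nra |].
  replace ((3 * t) ^ 3) with (27 * t ^ 3) in Hlo, Hhi by ring; lra.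
Qed.

Lemma half_ln1p_poly_sub_le :
  half_ln1p_poly (2 * a + t ^ 2) - (a + t ^ 2 / 2 - a ^ 2) <= 6 * t ^ 3.
Proof.
  pose proof cube_two_mul_add_sqr_bounds.
  assert (- a * t ^ 2 <= t ^ 3) by nra.
  assert (0 <= t ^ 4) by nra.
  unfold half_ln1p_poly; nra.
Qed.

Lemma half_ln1p_poly_near :
  -4 * t ^ 2 <= half_ln1p_poly (2 * a + t ^ 2) - a <= 4 * t ^ 2.
Proof.
  pose proof cube_two_mul_add_sqr_bounds.
  assert (t ^ 3 <= t ^ 2 / 16) by nra.
  assert (0 <= (2 * a + t ^ 2) ^ 2) by apply pow2_ge_0.
  assert ((2 * a + t ^ 2) ^ 2 <= 9 * t ^ 2) by nra.
  unfold half_ln1p_poly; split; nra.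
Qed.

Lemma sqr_sub_half_ln1p_poly_sqr_le : a ^ 2 - half_ln1p_poly (2 * a + t ^ 2) ^ 2 <= 12 * t ^ 3.
Proof.
  pose proof half_ln1p_poly_near as Hnear.
  set (D := half_ln1p_poly _) in *.
  assert (Hsum : -3 * t <= D + a <= 3 * t) by nra.
  replace (a ^ 2 - D ^ 2) with (- ((D - a) * (D + a))) by ring.
  nra.
Qed.

Lemma half_ln1p_poly_cube_le : half_ln1p_poly (2 * a + t ^ 2) ^ 3 <= 8 * t ^ 3.
Proof.
  pose proof half_ln1p_poly_near.
  destruct (cube_bounds (half_ln1p_poly (2 * a + t ^ 2)) (2 * t)) as [_ Hhi]; [nra |].
  replace ((2 * t) ^ 3) with (8 * t ^ 3) in Hhi by ring; exact Hhi.
Qed.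

End HalfLn1pPoly.

Lemma sqrt_add_half_ln1p_le L a t K :
  1 <= L -> 0 <= t <= 1 / 16 -> -t <= a <= t -> t ^ 3 <= K ->
  sqrt (L + ln (1 + (2 * a + t ^ 2)) / 2) - sqrt L <=
    1 / (2 * sqrt L) * (a + t ^ 2 / 2 - a ^ 2 + 100 * K)
    - 1 / (8 * (L * sqrt L)) * a ^ 2 + 100 * K / (L * sqrt L).
Proof.
  intros HL Ht Ha HK.
  pose proof (half_ln1p_poly_sub_le a t Ht Ha) as Hsub.
  pose proof (half_ln1p_poly_near a t Ht Ha) as Hnear.
  pose proof (sqr_sub_half_ln1p_poly_sqr_le a t Ht Ha) as Hsqr.
  pose proof (half_ln1p_poly_cube_le a t Ht Ha) as Hcube.
  set (D := half_ln1p_poly _) in *.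
  assert (Hln : ln (1 + (2 * a + t ^ 2)) / 2 <= D).
  { pose proof (ln_1p_le_cubic (2 * a + t ^ 2) ltac:(nra)).
    unfold D, half_ln1p_poly; lra. }
  apply Rle_trans with (sqrt (L + D) - sqrt L).
  { apply Rplus_le_compat_r, sqrt_le_1_alt; lra. }
  eapply Rle_trans; [apply Rplus_le_compat_r, sqrt_add_le_taylor3; nra |].
  assert (Hq : 1 <= sqrt L) by (rewrite <- sqrt_1; apply sqrt_le_1_alt; lra).
  assert (Hq2 : sqrt L * sqrt L = L) by (apply sqrt_sqrt; lra).
  set (q := sqrt L) in *; rewrite <- Hq2.
  set (P := 8 * q ^ 4 * (a + t ^ 2 / 2 - a ^ 2 + 100 * K - D) + 2 * q ^ 2 * (D ^ 2 - a ^ 2)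
            + 1600 * q ^ 2 * K - D ^ 3).
  assert (HP : 0 <= P).
  { assert (Hq2' : 1 <= q ^ 2) by nra.
    assert (0 <= t ^ 3) by (apply pow_le; lra).
    assert (0 <= q ^ 4 * (a + t ^ 2 / 2 - a ^ 2 + 100 * K - D))
      by (apply Rmult_le_pos; [apply pow_le |]; lra).
    assert (-12 * q ^ 2 * t ^ 3 <= q ^ 2 * (D ^ 2 - a ^ 2)) by nra.
    assert (q ^ 2 * t ^ 3 <= q ^ 2 * K) by nra.
    assert (t ^ 3 <= q ^ 2 * t ^ 3) by nra.
    unfold P; lra. }
  apply Rminus_le.
  match goal with |- ?gap <= 0 => replace gap with (- (P / (16 * q ^ 5))) by (unfold P; field; lra) end.
  enough (0 <= P / (16 * q ^ 5)) by lra.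
  apply Rle_mult_inv_pos; [exact HP | pose proof (pow_lt q 5 ltac:(lra)); lra].
Qed.

Lemma norm_vadd_sqr x y : 0 < norm x ->
  norm (vadd x y) ^ 2 = norm x ^ 2 * (1 + (2 * (dot x y / norm x ^ 2) + (norm y / norm x) ^ 2)).
Proof.
  intros Hs.
  pose proof (norm_mul_self x) as Hx; pose proof (norm_mul_self y) as Hy.
  pose proof (norm_mul_self (vadd x y)) as Hxy; rewrite dot_vadd_self in Hxy.
  replace (norm (vadd x y) ^ 2) with (norm (vadd x y) * norm (vadd x y)) by ring.
  rewrite Hxy, <- Hx, <- Hy; field; lra.
Qed.

Lemma dot_div_sqr_norm_bounds x y : 0 < norm x ->
  - (norm y / norm x) <= dot x y / norm x ^ 2 <= norm y / norm x.
Proof.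
  intros Hs.
  pose proof (Rabs_dot_le x y) as CS; apply Rabs_le_between in CS.
  assert (Hs2 : 0 < norm x ^ 2) by (apply pow_lt; lra).
  replace (norm y / norm x) with (norm x * norm y / norm x ^ 2) by (field; lra).
  unfold Rdiv; split; [rewrite Ropp_mult_distr_l |];
    apply Rmult_le_compat_r; try (left; apply Rinv_0_lt_compat; exact Hs2); lra.
Qed.

Lemma ln_norm_vadd x y : 0 < norm x -> 0 < norm (vadd x y) ->
  ln (norm (vadd x y)) =
    ln (norm x) + ln (1 + (2 * (dot x y / norm x ^ 2) + (norm y / norm x) ^ 2)) / 2.
Proof.
  intros Hs Hn.
  pose proof (norm_vadd_sqr x y Hs) as Hsq.
  set (v := 1 + _) in *.
  assert (Hv : 0 < v).
  { apply (Rmult_lt_reg_l (norm x ^ 2)); [apply pow_lt; lra |].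
    rewrite Rmult_0_r, <- Hsq; apply pow_lt; lra. }
  apply (f_equal ln) in Hsq.
  rewrite ln_mult, !ln_pow in Hsq by (try apply pow_lt; lra).
  simpl INR in Hsq; lra.
Qed.

Lemma flog_vadd_sub_le_taylor x y E :
  1 <= ln (norm x) -> 16 <= E -> norm y <= norm x / E ->
  flog (vadd x y) - flog x <=
    1 / (2 * sqrt (ln (norm x))) *
      (dot x y / norm x ^ 2 + norm y ^ 2 / (2 * norm x ^ 2) - (dot x y) ^ 2 / norm x ^ 4
       + 100 * norm y ^ 2 / (norm x ^ 2 * E))
    - 1 / (8 * (ln (norm x) * sqrt (ln (norm x)))) * ((dot x y) ^ 2 / norm x ^ 4)
    + 100 * norm y ^ 2 / (norm x ^ 2 * E * (ln (norm x) * sqrt (ln (norm x)))).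
Proof.
  intros HL HE Hy.
  assert (Hs : 0 < norm x).
  { destruct (Rle_lt_dec (norm x) 0) as [Hs0 | Hs]; [rewrite (ln_nonpos _ Hs0) in HL; lra | exact Hs]. }
  pose proof (norm_nonneg y) as Hm.
  pose proof (dot_div_sqr_norm_bounds x y Hs) as Ha.
  set (a := dot x y / norm x ^ 2) in *; set (t := norm y / norm x) in *.
  assert (Ht0 : 0 <= t) by (apply Rle_mult_inv_pos; lra).
  assert (HtE : t <= / E).
  { replace (/ E) with (norm x / E / norm x) by (field; lra).
    apply Rmult_le_compat_r; [left; apply Rinv_0_lt_compat |]; lra. }
  assert (Ht : 0 <= t <= 1 / 16).
  { pose proof (Rinv_le_contravar 16 E ltac:(lra) HE); lra. }
  assert (HK : t ^ 3 <= t ^ 2 / E).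
  { replace (t ^ 3) with (t ^ 2 * t) by ring.
    apply Rmult_le_compat_l; [apply pow2_ge_0 | exact HtE]. }
  assert (Hn : 0 < norm (vadd x y)).
  { pose proof (norm_nonneg (vadd x y)); pose proof (norm_vadd_sqr x y Hs) as Hsq.
    assert (0 < norm (vadd x y) ^ 2).
    { rewrite Hsq; apply Rmult_lt_0_compat; [apply pow_lt; lra | fold a t; nra]. }
    nra. }
  assert (Hq : 0 < sqrt (ln (norm x))) by (apply sqrt_lt_R0; lra).
  rewrite !flog_sqrt_ln, (ln_norm_vadd x y Hs Hn); fold a t.
  eapply Rle_trans; [apply (sqrt_add_half_ln1p_le _ a t (t ^ 2 / E)); assumption |].
  right; unfold a, t; field; repeat split; lra.
Qed.

Lemma Rpower_1_sub x e : 0 < x -> Rpower x (1 - e) = x / Rpower x e.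
Proof. intros Hx; unfold Rminus; rewrite Rpower_plus, Rpower_Ropp, Rpower_1 by lra; reflexivity. Qed.

Lemma Rpower_2_add x e : 0 < x -> Rpower x (2 + e) = x ^ 2 * Rpower x e.
Proof.
  intros Hx; replace (2 + e) with (INR 2 + e) by (simpl; ring).
  rewrite Rpower_plus, Rpower_pow by lra; reflexivity.
Qed.

Lemma Rpower_3_2 x : 0 < x -> Rpower x (3 / 2) = x * sqrt x.
Proof.
  intros Hx; replace (3 / 2) with (1 + / 2) by field.
  rewrite Rpower_plus, Rpower_1, Rpower_sqrt by lra; reflexivity.
Qed.

Theorem lemma2p2 :
  (forall x y : R * R, x <> (0, 0) ->
     flog (vadd x y) - flog x <= 1 + norm y / norm x)
  /\
  (forall eps : R, 0 < eps < 1 ->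
     exists r C : R, 0 < r /\ 0 < C /\
       forall x y : R * R,
         r <= norm x ->
         norm y <= Rpower (norm x) (1 - eps) ->
         flog (vadd x y) - flog x <=
           1 / (2 * sqrt (ln (norm x))) *
             (dot x y / norm x ^ 2
              + norm y ^ 2 / (2 * norm x ^ 2)
              - (dot x y) ^ 2 / norm x ^ 4
              + C * norm y ^ 2 / Rpower (norm x) (2 + eps))
           - 1 / (8 * Rpower (ln (norm x)) (3 / 2)) * ((dot x y) ^ 2 / norm x ^ 4)
           + C * norm y ^ 2 / (Rpower (norm x) (2 + eps) * Rpower (ln (norm x)) (3 / 2))).
Proof.
  split; [exact flog_vadd_sub_le |].
  intros eps [Heps0 Heps1].
  exists (exp (15 / eps)), 100; split; [apply exp_pos | split; [lra |]].
  intros x y Hr Hy.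
  assert (Hs : 0 < norm x) by (pose proof (exp_pos (15 / eps)); lra).
  assert (HepsL : 15 <= eps * ln (norm x)).
  { replace 15 with (eps * ln (exp (15 / eps))) by (rewrite ln_exp; field; lra).
    apply Rmult_le_compat_l; [lra | apply ln_le; [apply exp_pos | exact Hr]]. }
  assert (HL : 1 <= ln (norm x)) by nra.
  assert (HE : 16 <= Rpower (norm x) eps).
  { unfold Rpower; pose proof (exp_ineq1_le (eps * ln (norm x))); lra. }
  rewrite Rpower_1_sub in Hy by lra.
  rewrite Rpower_2_add, Rpower_3_2 by lra.
  now apply flog_vadd_sub_le_taylor.
Qed.
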